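(* Let $f(\mathbf{x})=\mathbf{x}^{T}A\mathbf{x}+b^{T}\mathbf{x}+1$ with $A\in\mathbb{R}^{n\times n}$ symmetric and $b\in\mathbb{R}^n$. Then there exist real diagonal $2\times 2$ matrices $A_1,\dots,A_n$ with $f(\mathbf{x})=\det(I_2+x_1A_1+\dots+x_nA_n)$ if and only if $A-\frac14 bb^{T}$ is negative semidefinite and has rank at most $1$. *)

(* Real numbers are modelled by an arbitrary real closed field R : rcfType. *)
From HB Require Import structures.
From mathcomp Require Import all_boot all_order all_algebra.
Set Implicit Arguments. Unset Strict Implicit. Unset Printing Implicit Defensive.
Import Order.TTheory GRing.Theory Num.Theory.
Local Open Scope ring_scope.

Definition neg_semidef (R : numDomainType) (n : nat) (M : 'M[R]_n) : Prop :=
  forall x : 'cV[R]_n, (x^T *m M *m x) 0 0 <= 0.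

Definition quadf (R : comPzRingType) (n : nat) (A : 'M[R]_n) (b : 'cV[R]_n)
  (x : 'cV[R]_n) : R :=
  (x^T *m A *m x) 0 0 + (b^T *m x) 0 0 + 1.

(* Since each A_i is diagonal, det(I_2 + sum x_i A_i) = (1 + a.x)(1 + c.x), where a and c
   collect the two diagonal entries of the A_i.  Comparing f(x) with f(-x) shows that f has
   such a factorisation exactly when b = a + c and x^T A x = (a.x)(c.x), i.e. when
   A - bb^T/4 = -(a - c)(a - c)^T/4.  Conversely a negative semidefinite symmetric matrix of
   rank at most 1 is of the form -dd^T, and a = b/2 + d, c = b/2 - d give the A_i. *)
From HB Require Import structures.
From mathcomp Require Import all_boot all_order all_algebra.
From mathcomp Require Import ring lra.
Set Implicit Arguments. Unset Strict Implicit. Unset Printing Implicit Defensive.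
Import Order.TTheory GRing.Theory Num.Theory.
Local Open Scope ring_scope.

Section Forms.
Variables (R : comPzRingType) (n : nat).
Implicit Types (M N : 'M[R]_n) (u v x y z : 'cV[R]_n).

Definition bform M x y := (x^T *m M *m y) 0 0.
Definition vdot u x := (u^T *m x) 0 0.

Lemma bform_delta M i j : bform M (delta_mx i 0) (delta_mx j 0) = M i j.
Proof. by rewrite /bform trmx_delta -rowE -colE !mxE. Qed.

Lemma bformDl M x y z : bform M (x + y) z = bform M x z + bform M y z.
Proof. by rewrite /bform linearD /= !mulmxDl mxE. Qed.

Lemma bformDr M x y z : bform M z (x + y) = bform M z x + bform M z y.
Proof. by rewrite /bform mulmxDr mxE. Qed.

Lemma bformZl M a x y : bform M (a *: x) y = a * bform M x y.
Proof. by rewrite /bform linearZ /= -!scalemxAl mxE. Qed.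

Lemma bformZr M a x y : bform M x (a *: y) = a * bform M x y.
Proof. by rewrite /bform -scalemxAr mxE. Qed.

Lemma bformD M N x y : bform (M + N) x y = bform M x y + bform N x y.
Proof. by rewrite /bform mulmxDr mulmxDl mxE. Qed.

Lemma bformB M N x y : bform (M - N) x y = bform M x y - bform N x y.
Proof. by rewrite /bform mulmxBr mulmxBl !mxE. Qed.

Lemma bformZ a M x y : bform (a *: M) x y = a * bform M x y.
Proof. by rewrite /bform -scalemxAr -scalemxAl mxE. Qed.

Lemma vdotC u x : vdot u x = vdot x u.
Proof. by rewrite /vdot -[in RHS](trmxK u) -trmx_mul [in RHS]mxE. Qed.

Lemma vdotDl u v x : vdot (u + v) x = vdot u x + vdot v x.
Proof. by rewrite /vdot linearD /= mulmxDl mxE. Qed.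

Lemma vdotBl u v x : vdot (u - v) x = vdot u x - vdot v x.
Proof. by rewrite /vdot linearB /= mulmxBl !mxE. Qed.

Lemma vdotZl a u x : vdot (a *: u) x = a * vdot u x.
Proof. by rewrite /vdot linearZ /= -scalemxAl mxE. Qed.

Lemma vdotZr a u x : vdot u (a *: x) = a * vdot u x.
Proof. by rewrite /vdot -scalemxAr mxE. Qed.

Lemma bform_outer u v x y : bform (u *m v^T) x y = vdot u x * vdot v y.
Proof. by rewrite /bform mulmxA -mulmxA mxE big_ord1 [vdot u x]vdotC. Qed.

End Forms.

Lemma sym_mx_bform_inj (R : numDomainType) n (M N : 'M[R]_n) :
  M^T = M -> N^T = N -> (forall x, bform M x x = bform N x x) -> M = N.
Proof.
move=> sM sN eqMN; apply/eqP; rewrite -subr_eq0; apply/eqP/matrixP => i j.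
set P := M - N.
have sP : P j i = P i j by rewrite -[in LHS](_ : P^T = P) ?mxE // /P linearB /= sM sN.
have P0 x : bform P x x = 0 by rewrite bformB eqMN subrr.
have := P0 (delta_mx i 0 + delta_mx j 0).
rewrite bformDl !bformDr !bform_delta sP.
have := P0 (delta_mx i 0); rewrite bform_delta => ->.
have := P0 (delta_mx j 0); rewrite bform_delta => ->.
by rewrite add0r addr0 -mulr2n => /eqP; rewrite mulrn_eq0 => /eqP ->; rewrite !mxE.
Qed.

Lemma det_add1_diag_comb (R : comNzRingType) n m (Ai : 'I_n -> 'M[R]_m)
    (x : 'cV[R]_n) : (forall i, is_diag_mx (Ai i)) ->
  \det (1%:M + \sum_(i < n) x i 0 *: Ai i) =
  \prod_(k < m) (1 + vdot (\col_i Ai i k k) x).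
Proof.
move=> diagA.
have entry k l : (1%:M + \sum_(i < n) x i 0 *: Ai i) k l =
                 (k == l)%:R + \sum_(i < n) x i 0 * Ai i k l.
  by rewrite !mxE summxE; congr (_ + _); apply: eq_bigr => i _; rewrite mxE.
rewrite det_trig; last first.
  apply/is_trig_mxP => k l lt_kl; rewrite entry.
  have -> : (k == l) = false by apply/eqP => kl; rewrite kl ltnn in lt_kl.
  by rewrite add0r big1 // => i _; rewrite (is_diag_mxP (diagA i)) ?mulr0 ?ltn_eqF.
apply: eq_bigr => k _; rewrite entry eqxx /vdot mxE; congr (_ + _).
by apply: eq_bigr => i _; rewrite !mxE mulrC.
Qed.

Lemma neg_semidef_scale_outer (R : realDomainType) n a (d : 'cV[R]_n) :
  a <= 0 -> neg_semidef (a *: (d *m d^T)).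
Proof.
move=> a_le0 x; rewrite -/(bform _ x x) bformZ bform_outer [vdot d x]vdotC.
by rewrite mulr_le0_ge0 // -expr2 sqr_ge0.
Qed.

Lemma rank_outer_le1 (R : fieldType) n (u v : 'cV[R]_n) : (\rank (u *m v^T) <= 1)%N.
Proof. exact: leq_trans (mxrankM_maxl _ _) (rank_leq_col _). Qed.

Lemma rank_le1_outer (R : fieldType) n (M : 'M[R]_n) :
  (\rank M <= 1)%N -> exists u v : 'cV_n, M = u *m v^T.
Proof.
move=> rk; rewrite -(mulmx_base M); move: rk (col_base M) (row_base M).
case: (\rank M) => [|[|//]] _ U V.
  by exists 0, 0; rewrite thinmx0 !mul0mx.
by exists U, V^T; rewrite trmxK.
Qed.

Lemma sym_neg_semidef_outer (R : rcfType) n (u v : 'cV[R]_n) :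
  (u *m v^T)^T = u *m v^T -> neg_semidef (u *m v^T) ->
  exists d : 'cV_n, u *m v^T = - (d *m d^T).
Proof.
move=> sym nsd.
have outerE (w z : 'cV[R]_n) i j : (w *m z^T) i j = w i 0 * z j 0.
  by rewrite mxE big_ord1 mxE.
have uv_sym i j : u i 0 * v j 0 = u j 0 * v i 0 by rewrite -!outerE -[in LHS]sym mxE.
have [k /= uk0 | u0] := pickP (fun k => u k 0 != 0); last first.
  exists 0; rewrite mul0mx oppr0; apply/matrixP => i j.
  by rewrite outerE mxE; move/negbFE/eqP: (u0 i) => ->; rewrite mul0r.
(* symmetry forces v = l u, and semidefiniteness forces l <= 0 *)
set l := v k 0 / u k 0.
have vE j : v j 0 = l * u j 0.
  by rewrite /l mulrAC [v k 0 * _]mulrC uv_sym mulrAC divff // mul1r.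
have l_le0 : l <= 0.
  have := nsd (delta_mx k 0); rewrite -/(bform _ _ _) bform_delta outerE vE.
  have uk2_gt0 : 0 < u k 0 ^+ 2 by rewrite lt0r sqrf_eq0 uk0 sqr_ge0.
  by rewrite mulrCA -expr2 pmulr_lle0.
exists (Num.sqrt (- l) *: u); apply/matrixP => i j.
have sqrtE : Num.sqrt (- l) ^+ 2 = - l by rewrite sqr_sqrtr // oppr_ge0.
rewrite outerE [RHS]mxE outerE !mxE vE.
by rewrite mulrACA -expr2 sqrtE mulNr opprK mulrCA.
Qed.

Lemma det_add1_diag2_comb (R : comNzRingType) n (Ai : 'I_n -> 'M[R]_2)
    (x : 'cV[R]_n) : (forall i, is_diag_mx (Ai i)) ->
  \det (1%:M + \sum_(i < n) x i 0 *: Ai i) =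
  (1 + vdot (\col_i Ai i 0 0) x) * (1 + vdot (\col_i Ai i 1 1) x).
Proof.
move=> diagA; rewrite det_add1_diag_comb // big_ord_recl big_ord1.
by have -> : lift ord0 ord0 = 1 :> 'I_2 by apply/val_inj.
Qed.

Lemma quadf_factor_defect (R : realFieldType) n (A : 'M[R]_n) (b a c : 'cV[R]_n) :
  A^T = A -> (forall x, quadf A b x = (1 + vdot a x) * (1 + vdot c x)) ->
  A - 4^-1 *: (b *m b^T) = - 4^-1 *: ((a - c) *m (a - c)^T).
Proof.
move=> symA fE.
(* comparing f(x) with f(-x) separates the linear and the quadratic parts *)
have parts x : vdot b x = vdot a x + vdot c x /\ bform A x x = vdot a x * vdot c x.
  have := fE x; have := fE (- 1 *: x).
  rewrite /quadf -!/(bform _ _ _) -!/(vdot _ _) bformZl bformZr !vdotZr.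
  by move=> h1 h2; split; lra.
apply: sym_mx_bform_inj => [||x].
- by rewrite linearB /= linearZ /= trmx_mul trmxK symA.
- by rewrite linearZ /= trmx_mul trmxK.
have [bE AE] := parts x.
rewrite bformB !bformZ !bform_outer !vdotBl AE bE.
by field; rewrite ?pnatr_eq0.
Qed.

Lemma quadf_factor_of_defect (R : numFieldType) n (A : 'M[R]_n) (b d : 'cV[R]_n) :
  A - 4^-1 *: (b *m b^T) = - (d *m d^T) ->
  forall x, quadf A b x = (1 + vdot (2^-1 *: b + d) x) * (1 + vdot (2^-1 *: b - d) x).
Proof.
move=> defectE x; rewrite -[A](subrK (4^-1 *: (b *m b^T))) defectE.
rewrite /quadf -/(bform _ _ _) -/(vdot _ _) bformD bformZ -scaleN1r bformZ.
rewrite !bform_outer vdotDl vdotBl vdotZl.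
by field; rewrite ?pnatr_eq0.
Qed.

Theorem mainTheorem3 (R : rcfType) (n : nat) (A : 'M[R]_n) (b : 'cV[R]_n)
  (hA : A^T = A) :
  (exists Ai : 'I_n -> 'M[R]_2,
      (forall i, is_diag_mx (Ai i)) /\
      (forall x : 'cV[R]_n,
          quadf A b x = \det (1%:M + \sum_(i < n) x i 0 *: Ai i)))
  <-> (neg_semidef (A - 4^-1 *: (b *m b^T)) /\ leq (\rank (A - 4^-1 *: (b *m b^T))) 1).
Proof.
split => [[Ai [diagA fE]] | [nsd rk]].
  have fE2 x : quadf A b x = (1 + vdot (\col_i Ai i 0 0) x) * (1 + vdot (\col_i Ai i 1 1) x).
    by rewrite fE det_add1_diag2_comb.
  rewrite (quadf_factor_defect hA fE2).
  split; first by apply: neg_semidef_scale_outer; rewrite oppr_le0 invr_ge0 ler0n.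
  by rewrite scalemxAl rank_outer_le1.
have [u [v uvE]] := rank_le1_outer rk.
have [d dE] : exists d : 'cV_n, A - 4^-1 *: (b *m b^T) = - (d *m d^T).
  rewrite uvE; apply: sym_neg_semidef_outer; rewrite -uvE //.
  by rewrite linearB /= linearZ /= trmx_mul trmxK hA.
set a := 2^-1 *: b + d; set c := 2^-1 *: b - d.
exists (fun i => diag_mx (\row_k (if k == 0 then a i 0 else c i 0))).
split=> [i | x]; first exact: diag_mx_is_diag.
rewrite det_add1_diag2_comb => [|i]; last exact: diag_mx_is_diag.
rewrite (quadf_factor_of_defect dE); congr ((1 + vdot _ x) * (1 + vdot _ x)).
  by apply/matrixP => i j; rewrite !mxE ord1.
by apply/matrixP => i j; rewrite !mxE ord1.
Qed.
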